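(* Let $G$ be a group, let $k\geqslant 1$ and $\alpha,\beta>0$. Suppose $U$ is a $k$-approximate group in $G$ satisfying $|U^n|\geqslant(\alpha|U|)^{\beta n}$ for every $n\in\mathbb{N}$. Then $|U|\leqslant k^{\lceil 2/\beta\rceil-1}/\alpha^2$.
   Context: A finite symmetric subset $U\subset G$ is a $k$-approximate group if there is a finite subset $X\subset G$ with $|X|\leqslant k$ and $U^2\subset XU$. Here $U^n=\{u_1\cdots u_n:u_i\in U\}$. *)

From HB Require Import structures.
From mathcomp Require Import all_boot all_order all_algebra.
From mathcomp Require Import finmap.
From mathcomp Require Import all_classical all_reals.
From mathcomp Require Import exp.
Set Implicit Arguments. Unset Strict Implicit. Unset Printing Implicit Defensive.
Import Order.TTheory GRing.Theory Num.Theory.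
Local Open Scope fset_scope.

Definition is_group (G : Type) (mul : G -> G -> G) (one : G) (inv : G -> G) : Prop :=
  [/\ forall x y z, mul x (mul y z) = mul (mul x y) z,
      forall x, mul one x = x, forall x, mul x one = x,
      forall x, mul (inv x) x = one & forall x, mul x (inv x) = one].

Definition setmul (G : choiceType) (mul : G -> G -> G) (A B : {fset G}) : {fset G} :=
  [fset mul a b | a in A, b in B].

Fixpoint setpow (G : choiceType) (mul : G -> G -> G) (one : G) (U : {fset G}) (n : nat)
  : {fset G} :=
  match n with
  | 0 => [fset one]
  | n'.+1 => setmul mul U (setpow mul one U n')
  end.

Definition symmetric_set (G : choiceType) (inv : G -> G) (U : {fset G}) : Prop :=
  forall u, u \in U -> inv u \in U.

Definition approx_group (R : realType) (G : choiceType) (mul : G -> G -> G) (inv : G -> G)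
  (k : R) (U : {fset G}) : Prop :=
  symmetric_set inv U /\
  exists X : {fset G}, ((#|` X |)%:R <= k)%R /\ setmul mul U U `<=` setmul mul X U.

From HB Require Import structures.
From mathcomp Require Import all_boot all_order all_algebra.
From mathcomp Require Import finmap.
From mathcomp Require Import all_classical all_reals.
From mathcomp Require Import exp.
From mathcomp Require Import lra.
Import Order.TTheory GRing.Theory Num.Theory.

(* Iterating U^2 ⊆ XU gives U^(n+1) ⊆ X^n U, hence |U^(n+1)| <= k^n |U|.  For
   n + 1 = ⌈2/β⌉ the growth hypothesis then gives
   (α|U|)^2 <= (α|U|)^(β(n+1)) <= k^n |U| as soon as α|U| >= 1; if α|U| < 1 the
   bound is immediate because |U| is 0 or at least 1. *)

Section SetProducts.
Local Open Scope fset_scope.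
Variables (G : choiceType) (mul : G -> G -> G) (one : G).

Lemma leq_card_setmul (X A : {fset G}) : (#|` setmul mul X A| <= #|` X| * #|` A|)%N.
Proof.
by rewrite /setmul unlock size_seq_fset (leq_trans (size_undup _)) ?size_allpairs.
Qed.

Hypothesis mulA : associative mul.
Variables U X : {fset G}.
Hypothesis UU_XU : setmul mul U U `<=` setmul mul X U.

Lemma setpowS_sub n : setpow mul one U n.+2 `<=` setmul mul X (setpow mul one U n.+1).
Proof.
apply/fsubsetP => _ /imfset2P[u1 u1U [_ /imfset2P[u2 u2U [w wUn ->]] ->]].
rewrite mulA.
have /(fsubsetP UU_XU)/imfset2P[x xX [u uU ->]] : mul u1 u2 \in setmul mul U U.
  exact: in_imfset2.
by rewrite -mulA; apply: in_imfset2 => //; apply: in_imfset2.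
Qed.

Lemma leq_card_setpow n : (#|` setpow mul one U n.+1| <= #|` X| ^ n * #|` U|)%N.
Proof.
elim: n => [|n IHn].
  by rewrite expn0 mul1n (leq_trans (leq_card_setmul _ _)) ?cardfs1 ?muln1.
rewrite (leq_trans (fsubset_leq_card (setpowS_sub n))) //.
by rewrite (leq_trans (leq_card_setmul _ _)) // expnS -mulnA leq_mul2l IHn orbT.
Qed.

End SetProducts.

Local Open Scope ring_scope.

Section RealBounds.
Variable R : realType.

Lemma le_succ_absz_ceil_sub1 (x : R) : 0 < x -> x <= (`|Num.ceil x - 1|%N).+1%:R.
Proof.
move=> x_gt0; have ceil_ge1 : 1 <= Num.ceil x by rewrite -gtz0_ge1 ceil_gt0.
by rewrite -addn1 natrD natr_absz ger0_norm ?subr_ge0 // intrB subrK ceil_ge.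
Qed.

Lemma le_div_sqr_of_powR_le (alpha K e : R) (n : nat) :
  0 < alpha -> 1 <= K -> 2 <= e ->
  (alpha * n%:R) `^ e <= K * n%:R -> n%:R <= K / alpha ^+ 2.
Proof.
move=> alpha_gt0 K_ge1 e_ge2 growth.
rewrite ler_pdivlMr ?exprn_gt0 //.
case: n growth => [|n] growth; first by rewrite mul0r (le_trans ler01).
have n_ge1 : 1 <= n.+1%:R :> R by rewrite ler1n.
have [an_ge1|an_lt1] := leP 1 (alpha * n.+1%:R); last by nra.
have : (alpha * n.+1%:R) ^+ 2 <= K * n.+1%:R.
  apply: le_trans growth.
  rewrite -powR_mulrn ?(le_trans ler01) //.
  exact: ler_powR.
nra.
Qed.

End RealBounds.

Theorem proposition2p13 (R : realType) (G : choiceType)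
  (mul : G -> G -> G) (one : G) (inv : G -> G) (Ggrp : is_group mul one inv)
  (k alpha beta : R) (hk : 1 <= k) (halpha : 0 < alpha) (hbeta : 0 < beta)
  (U : {fset G}) (hU : approx_group mul inv k U)
  (hgrowth : forall n : nat, (0 < n)%N ->
      (alpha * (#|` U |)%:R) `^ (beta * n%:R) <= (#|` setpow mul one U n |)%:R) :
  (#|` U |)%:R <= k ^+ `|Num.ceil (2 / beta) - 1|%N / alpha ^+ 2.
Proof.
case: hU => _ [X [cardX UU_XU]]; case: Ggrp => mulA _ _ _ _.
set N := `|Num.ceil (2 / beta) - 1|%N.
have exponent_ge2 : 2 <= beta * N.+1%:R.
  by rewrite mulrC -ler_pdivrMr // le_succ_absz_ceil_sub1 ?divr_gt0.
have card_UN : (#|` setpow mul one U N.+1|)%:R <= k ^+ N * (#|` U|)%:R.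
  apply: (@le_trans _ _ (#|` X| ^ N * #|` U|)%:R).
    by rewrite ler_nat; apply: leq_card_setpow.
  by rewrite natrM natrX ler_wpM2r ?ler0n // lerXn2r ?nnegrE ?ler0n ?(le_trans ler01).
apply: le_div_sqr_of_powR_le halpha (exprn_ege1 N hk) exponent_ge2 _.
exact: le_trans (hgrowth N.+1 isT) card_UN.
Qed.
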